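(* Let $k\ge 2$ be an integer, $\pi\in S_k$, $\epsilon>0$, and let $\delta_0\ge 1$ and $\Delta_0$ be positive constants. There is a constant $c=c(k,\pi,\epsilon,\delta_0,\Delta_0)$ such that the following holds. Let $n, L$ be positive integers and let $\Lambda$ be a $k$-uniform hypergraph on vertex set $\{1,\dots,n\}$ which contains a collection of $L$-vertex cliques (sets of $L$ vertices all of whose $k$-subsets are edges of $\Lambda$) such that each of the $n$ vertices belongs to at least $\delta_0$ and at most $\Delta_0$ cliques of the collection. Then the number of $\sigma\in S_n$ that $\Lambda$-avoid $\pi$ is at most \[\left(\frac{c\, n\log^{2+\epsilon}n}{L}\right)^n.\]
   Context: For a $k$-uniform hypergraph $\Lambda$ on vertex set $\{1,\dots,n\}$, a permutation $\sigma\in S_n$ $\Lambda$-contains $\pi\in S_k$ if there exist integers $1\le x_1<\dots<x_k\le n$ with $\{x_1,\dots,x_k\}\in E(\Lambda)$ such that for all $i,j$, $\pi(i)<\pi(j)\iff\sigma(x_i)<\sigma(x_j)$; otherwise $\sigma$ $\Lambda$-avoids $\pi$. *)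

From Stdlib Require Import Reals.
From mathcomp Require Import all_boot all_fingroup.
Set Implicit Arguments.
Unset Strict Implicit.
Unset Printing Implicit Defensive.

(* A k-uniform hypergraph on vertex set 'I_n (= {1..n} shifted to {0..n-1})
   is a set of edges, each a k-subset of 'I_n. *)
Definition k_uniform (n k : nat) (E : {set {set 'I_n}}) : Prop :=
  forall e, e \in E -> #|e| = k.

Definition hcontains (n k : nat) (E : {set {set 'I_n}}) (pi : 'S_k)
    (sigma : 'S_n) : bool :=
  [exists x : {ffun 'I_k -> 'I_n},
    [&& [forall i : 'I_k, forall j : 'I_k, (i < j)%N ==> (x i < x j)%N],
        [set x i | i : 'I_k] \in E &
        [forall i : 'I_k, forall j : 'I_k,
           (pi i < pi j)%N == (sigma (x i) < sigma (x j))%N]]].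

Definition havoids (n k : nat) (E : {set {set 'I_n}}) (pi : 'S_k)
    (sigma : 'S_n) : bool := ~~ hcontains E pi sigma.

Definition is_clique (n k : nat) (E : {set {set 'I_n}}) (C : {set 'I_n}) : Prop :=
  forall S : {set 'I_n}, S \subset C -> #|S| = k -> S \in E.

From Stdlib Require Import Reals Lra.
From mathcomp Require Import all_boot all_fingroup zify.
Set Implicit Arguments.
Unset Strict Implicit.
Unset Printing Implicit Defensive.

(* Choose for every vertex v a clique ch v of the collection containing it.
   A permutation sigma is determined by the clique ch (sigma^-1 w) of every
   position w (at most |Cl|^n choices) together with, for every clique C, the
   pattern of sigma on the part ch^-1 C, a set of |ch^-1 C| points in a square
   grid of that side.  Any k vertices of a part form an edge, so when sigma
   Lambda-avoids pi all these patterns avoid pi.  By the Marcus-Tardos theorem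
   a pi-avoiding set of points of the m x m grid has O(m) elements, and
   Klazar's doubling argument turns this into at most K^m such sets; hence
   there are at most (K |Cl|)^n avoiders.  Double counting gives
   |Cl| L <= Delta0 n, so the number of avoiders is at most (K Delta0 n / L)^n,
   which is stronger than the claimed bound since log n >= log 2. *)

Lemma sorted_enum_ord M (A : {pred 'I_M}) : sorted (relpre val ltn) (enum A).
Proof.
rewrite -sorted_map; apply: (subseq_sorted ltn_trans _ (iota_ltn_sorted 0 M)).
rewrite -val_enum_ord map_subseq // /enum_mem.
by rewrite [X in subseq _ X](@eq_filter _ _ predT) // filter_predT filter_subseq.
Qed.

Lemma increasing_in_set M k (A : {set 'I_M}) : k <= #|A| ->
  exists2 x : 'I_k -> 'I_M, forall t, x t \in A & {homo x : s t / s < t}.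
Proof.
move=> hk; exists (fun t => enum_val (widen_ord hk t)) => [t | s t st].
  exact: enum_valP.
pose x0 := enum_val (widen_ord hk s); rewrite !(enum_val_nth x0).
have := sorted_ltn_nth (fun a b c => @ltn_trans (val a) (val b) (val c)) x0
  (sorted_enum_ord A).
by move=> /(_ s t); rewrite !inE /= -cardE !(leq_trans (ltn_ord _) hk); apply.
Qed.

Lemma card_le_range N (A : {set 'I_N}) a q :
  (forall i, i \in A -> a <= i < a + q) -> #|A| <= q.
Proof.
move=> hA; rewrite cardE -(size_map val) -(size_iota a q).
apply: uniq_leq_size => [|_ /mapP[i + ->]].
  by rewrite map_inj_uniq ?enum_uniq //; apply: val_inj.
by rewrite mem_enum mem_iota => /hA.
Qed.

Lemma card_divn_eq N q J : 0 < q -> #|[set i : 'I_N | i %/ q == J]| <= q.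
Proof.
move=> q0; apply: (card_le_range (a := J * q)) => i; rewrite inE => /eqP <-.
by rewrite {2 3}(divn_eq i q) leq_addr /= ltn_add2l ltn_pmod.
Qed.

Lemma card_le_mul_fibers N (T : finType) (B : {set T}) (proj : T -> 'I_N) a M :
  (forall b, b \in B -> proj b < a) ->
  (forall J, #|[set b in B | proj b == J]| <= M) -> #|B| <= a * M.
Proof.
move=> hB hJ; rewrite -sum1_card (partition_big proj (fun J : 'I_N => J < a)) //=.
apply: (@leq_trans (\sum_(J : 'I_N | J < a) M)).
  by apply: leq_sum => J _; rewrite sum1dep_card.
rewrite sum_nat_const leq_mul2r orbC.
have := card_le_range (a := 0) (q := a) (A := [set J : 'I_N | J < a]).
by rewrite cardsE => -> // i; rewrite inE.
Qed.

Lemma ltn_divn d m n : m %/ d < n %/ d -> m < n.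
Proof. by apply: contraTT; rewrite -!leqNgt; apply: leq_div2r. Qed.

Lemma sum_nat_bool (T : finType) (B : {set T}) (P : pred T) :
  \sum_(b in B) (P b : nat) = #|[set b in B | P b]|.
Proof. by rewrite -sum1dep_card big_mkcondr; apply: eq_bigr => b _; case: (P b). Qed.

Lemma expn_up_log_leq p a : 1 < p -> 0 < a -> p ^ up_log p a <= p * a.
Proof.
move=> p1 a0; case: (leqP a 1) => [a1 | a1].
  have -> : a = 1 by lia.
  by rewrite up_log1 expn0 muln1 ltnW.
have [lt _] := andP (up_log_bounds p1 a1).
rewrite -(prednK (_ : 0 < up_log p a)) ?up_log_gt0 ?p1 // expnS leq_mul2l.
by rewrite ltnW ?orbT.
Qed.

Lemma ord_homo_inj m n (x : 'I_m -> 'I_n) : {homo x : i j / i < j} -> injective x.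
Proof.
move=> x_incr i j e; case: (ltngtP i j) => [ij | ji | /ord_inj //].
  by have := x_incr _ _ ij; rewrite e ltnn.
by have := x_incr _ _ ji; rewrite e ltnn.
Qed.

Definition point N := ('I_N * 'I_N)%type.

Section Patterns.
Variables (N k : nat) (pi : 'S_k).
Implicit Types S : {set point N}.

Definition embeds S (f : 'I_k -> point N) : Prop :=
  [/\ forall t, f t \in S,
      forall s t : 'I_k, s < t -> (f s).1 < (f t).1 &
      forall s t : 'I_k, pi s < pi t -> (f s).2 < (f t).2].

Definition avoids S : bool :=
  [forall f : {ffun 'I_k -> point N},
     ~~ [&& [forall t, f t \in S],
            [forall s : 'I_k, forall t : 'I_k, (s < t) ==> ((f s).1 < (f t).1)] &
            [forall s : 'I_k, forall t : 'I_k, (pi s < pi t) ==> ((f s).2 < (f t).2)]]].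

Lemma avoidsP S : reflect (forall f, ~ embeds S f) (avoids S).
Proof.
apply: (iffP forallP) => [hS f [fS f1 f2] | hS f].
  move/negP: (hS [ffun t => f t]); apply; apply/and3P; split.
  - by apply/forallP => t; rewrite ffunE.
  - by do 2 apply/forallP => ?; apply/implyP; rewrite !ffunE; apply: f1.
  - by do 2 apply/forallP => ?; apply/implyP; rewrite !ffunE; apply: f2.
apply/and3P => -[/forallP fS f1 f2]; apply: (hS f); split=> // s t.
  by move: f1 => /forallP /(_ s) /forallP /(_ t) /implyP.
by move: f2 => /forallP /(_ s) /forallP /(_ t) /implyP.
Qed.

Definition shrink q (i : 'I_N) : 'I_N := insubd i (i %/ q).

Lemma shrinkE q i : shrink q i = i %/ q :> nat.
Proof. by rewrite val_insubd (leq_ltn_trans (leq_div _ _) (ltn_ord i)). Qed.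

Definition contract q (p : point N) : point N := (shrink q p.1, shrink q p.2).

Lemma avoids_contract q S : avoids S -> avoids (contract q @: S).
Proof.
move/avoidsP=> hS; apply/avoidsP => f [fS f1 f2].
have [g hg] : exists g : 'I_k -> point N, forall t, g t \in S /\ contract q (g t) = f t.
  apply: (fin_all_exists (P := fun t p => p \in S /\ contract q p = f t)) => t.
  by have /imsetP[p pS ->] := fS t; exists p.
apply: (hS g); split=> [t | s t /f1 | s t /f2]; first by case: (hg t).
all: case: (hg s) => _ <-; case: (hg t) => _ <- /=.
all: by rewrite !shrinkE; apply: ltn_divn.
Qed.

Definition box a := [set p : point N | (p.1 < a) && (p.2 < a)].

Lemma box_subset a b : a <= b -> box a \subset box b.
Proof.
move=> ab; apply/subsetP => p; rewrite !inE => /andP[h1 h2].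
by rewrite (leq_trans h1 ab) (leq_trans h2 ab).
Qed.

Lemma contract_box q a S : 0 < q ->
  S \subset box (a * q) -> contract q @: S \subset box a.
Proof.
move=> q0 /subsetP Sbox; apply/subsetP => _ /imsetP[p /Sbox pS ->].
by move: pS; rewrite !inE /= !shrinkE !ltn_divLR.
Qed.

End Patterns.

Definition transpose {N} (p : point N) : point N := (p.2, p.1).

Lemma transposeK N : involutive (@transpose N).
Proof. by case. Qed.

Lemma contract_transpose N q (p : point N) :
  contract q (transpose p) = transpose (contract q p).
Proof. by []. Qed.

Lemma avoids_transpose N k (pi : 'S_k) (S : {set point N}) :
  avoids pi S -> avoids pi^-1 (transpose @: S).
Proof.
move/avoidsP=> hS; apply/avoidsP => f [fS f1 f2].
apply: (hS (fun t => transpose (f (pi t)))); split=> [t | s t st | s t st].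
- by have /imsetP[p pS ->] := fS (pi t); rewrite transposeK.
- by apply: f2; rewrite !permK.
- exact: f1.
Qed.

Lemma card_box N a : #|box N a| <= a ^ 2.
Proof.
pose I := [set i : 'I_N | i < a].
have cardI : #|I| <= a by apply: (card_le_range (a := 0)) => i; rewrite inE.
apply: leq_trans (_ : #|setX I I| <= _); last by rewrite cardsX expnS expn1 leq_mul.
by apply: subset_leq_card; apply/subsetP => p; rewrite !inE.
Qed.

Section Blocks.
Variables (N k q : nat).
Hypotheses (k0 : 0 < k) (q0 : 0 < q).
Implicit Types (S : {set point N}) (b : point N).

Definition block S b := [set p in S | contract q p == b].
Definition block_rows S b := [set p.1 | p in block S b].
Definition block_cols S b := [set p.2 | p in block S b].
Definition wide_blocks S := [set b in contract q @: S | k <= #|block_cols S b|].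
Definition tall_blocks S := [set b in contract q @: S | k <= #|block_rows S b|].

Lemma card_block S b : #|block S b| <= #|block_rows S b| * #|block_cols S b|.
Proof.
rewrite -cardsX; apply: subset_leq_card; apply/subsetP => -[i j] ij_b.
by rewrite in_setX; apply/andP; split; apply/imsetP; exists (i, j).
Qed.

Lemma block_rowsP S b i : i \in block_rows S b -> i %/ q = b.1.
Proof. by case/imsetP=> p; rewrite inE => /andP[_ /eqP <-] ->; rewrite shrinkE. Qed.

Lemma block_colsP S b i : i \in block_cols S b -> i %/ q = b.2.
Proof. by case/imsetP=> p; rewrite inE => /andP[_ /eqP <-] ->; rewrite shrinkE. Qed.

Lemma card_block_rows S b : #|block_rows S b| <= q.
Proof.
apply: leq_trans (card_divn_eq N b.1 q0); apply: subset_leq_card.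
by apply/subsetP => i /block_rowsP; rewrite inE => ->.
Qed.

Lemma card_block_cols S b : #|block_cols S b| <= q.
Proof.
apply: leq_trans (card_divn_eq N b.2 q0); apply: subset_leq_card.
by apply/subsetP => i /block_colsP; rewrite inE => ->.
Qed.

(* Wide blocks sharing their column set X lie in one block column; k of them
   would give an occurrence of pi, rows taken in block order and columns
   chosen in X according to pi. *)
Lemma card_wide_blocks_cols (pi : 'S_k) S X : avoids pi S ->
  #|[set b in wide_blocks S | block_cols S b == X]| < k.
Proof.
move/avoidsP=> hS; rewrite ltnNge; apply/negP => hF.
set F := [set b in wide_blocks S | _] in hF.
have FP b : b \in F -> k <= #|X| /\ block_cols S b = X.
  by rewrite !inE => /andP[/andP[_ wide] /eqP colsX]; rewrite -colsX.
have [b0 /FP[hX _]] : exists b0, b0 \in F by apply/set0Pn; rewrite -card_gt0; lia.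
have [x xX] : exists x, x \in X by apply/set0Pn; rewrite -card_gt0; lia.
have line b : b \in F -> b.2 = x %/ q :> nat.
  by case/FP=> _ cols; rewrite (block_colsP (S := S) (b := b)) // cols.
have injF : {in F &, injective fst}.
  move=> b b' /line e /line e' eq1; apply: injective_projections => //.
  by apply: ord_inj; rewrite e e'.
have [r rF r_incr] : exists2 r : 'I_k -> 'I_N,
    forall t, r t \in fst @: F & {homo r : s t / s < t}.
  by apply: increasing_in_set; rewrite card_in_imset.
have [c cX c_incr] := increasing_in_set hX.
have [g hg] : exists g : 'I_k -> point N,
    forall t, [/\ g t \in S, (g t).1 %/ q = r t & (g t).2 = c (pi t)].
  apply: (fin_all_exists
    (P := fun t p => [/\ p \in S, p.1 %/ q = r t & p.2 = c (pi t)])) => t.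
  have /imsetP[b /FP[_ cols] ->] := rF t.
  have /imsetP[p] : c (pi t) \in block_cols S b by rewrite cols cX.
  by rewrite inE => /andP[pS /eqP <-] ->; exists p; rewrite shrinkE.
apply: (hS g); split=> [t | s t st | s t st].
- by case: (hg t).
- by apply: (@ltn_divn q); case: (hg s) => _ -> _; case: (hg t) => _ -> _; apply: r_incr.
- by case: (hg s) => _ _ ->; case: (hg t) => _ _ ->; apply: c_incr.
Qed.

Lemma card_wide_blocks_line (pi : 'S_k) S (J : 'I_N) : avoids pi S ->
  #|[set b in wide_blocks S | b.2 == J]| <= 2 ^ q * k.-1.
Proof.
move=> aS; rewrite -sum1_card.
rewrite (partition_big (block_cols S) (mem (powerset [set i : 'I_N | i %/ q == J]))) /=.
  apply: leq_trans (_ : \sum_(X in powerset _) k.-1 <= _).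
    apply: leq_sum => X _; rewrite -ltnS prednK //.
    apply: leq_ltn_trans _ (card_wide_blocks_cols X aS); rewrite sum1dep_card.
    by apply/subset_leq_card/subsetP => b; rewrite !inE => /andP[/andP[-> _] ->].
  by rewrite sum_nat_const card_powerset leq_mul2r leq_pexp2l ?orbT // card_divn_eq.
move=> b; rewrite !inE => /andP[_ /eqP bJ]; apply/subsetP => i.
by move=> /block_colsP e; rewrite inE e bJ.
Qed.

Lemma card_wide_blocks (pi : 'S_k) S a : S \subset box N (a * q) -> avoids pi S ->
  #|wide_blocks S| <= a * (2 ^ q * k.-1).
Proof.
move=> Sbox aS; apply: (card_le_mul_fibers (proj := snd)) => [b | J].
  by rewrite inE => /andP[/(subsetP (contract_box q0 Sbox))]; rewrite inE => /andP[].
exact: (card_wide_blocks_line J aS).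
Qed.

End Blocks.

Lemma card_tall_blocks N k (pi : 'S_k) q (S : {set point N}) a : 0 < k -> 0 < q ->
  S \subset box N (a * q) -> avoids pi S -> #|tall_blocks k q S| <= a * (2 ^ q * k.-1).
Proof.
move=> k0 q0 Sbox /avoids_transpose aS.
have tSbox : transpose @: S \subset box N (a * q).
  by apply/subsetP => y /imsetP[p /(subsetP Sbox) + ->]; rewrite !inE andbC.
apply: leq_trans (card_wide_blocks k0 q0 tSbox aS).
rewrite -(card_imset _ (inv_inj (@transposeK N))); apply/subset_leq_card/subsetP.
move=> y /imsetP[b]; rewrite !inE => /andP[/imsetP[p pS ->] tall] ->.
rewrite -contract_transpose !imset_f //=; apply: leq_trans tall _.
apply/subset_leq_card/subsetP => i /imsetP[u]; rewrite inE => /andP[uS /eqP ub] ->.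
by apply/imsetP; exists (transpose u); rewrite // inE imset_f //= !contract_transpose ub.
Qed.

(* This constant closes the induction of marcus_tardos_pow: wide and tall
   blocks contribute at most 2 q^2 q^j 2^q (k-1) points, every other block at
   most (k-1)^2 < q = k^2. *)
Definition mt_const k := 2 * (k ^ 2) ^ 2 * (2 ^ k ^ 2 * k.-1) + 1.

Section MarcusTardos.
Variables (N k : nat) (pi : 'S_k).
Hypothesis k1 : 1 < k.
Local Notation q := (k ^ 2).
Implicit Types S : {set point N}.

Let k_gt0 : 0 < k. Proof. exact: ltnW. Qed.
Let q_gt0 : 0 < q. Proof. by rewrite expn_gt0 k_gt0. Qed.

Lemma card_le_blocks S : #|S| <=
  k.-1 ^ 2 * #|contract q @: S| + q ^ 2 * (#|wide_blocks k q S| + #|tall_blocks k q S|).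
Proof.
have -> : #|S| = \sum_(b in contract q @: S) #|block q S b|.
  rewrite -sum1_card (partition_big (contract q) (mem (contract q @: S))) => [|p pS].
    by apply: eq_bigr => b _; rewrite sum1dep_card.
  exact: imset_f.
rewrite -!sum_nat_bool -big_split mulnC -sum_nat_const big_distrr -big_split /=.
apply: leq_sum => b _; apply: leq_trans (card_block q S b) _.
have rows := card_block_rows q_gt0 S b; have cols := card_block_cols q_gt0 S b.
by case: (leqP k #|block_cols q S b|); case: (leqP k #|block_rows q S b|); nia.
Qed.

Lemma marcus_tardos_pow j S :
  S \subset box N (q ^ j) -> avoids pi S -> #|S| <= mt_const k * q ^ j.
Proof.
elim: j S => [|j IH] S Sbox aS.
  rewrite expn0 muln1 (leq_trans (subset_leq_card Sbox)) //.
  by rewrite (leq_trans (card_box N 1)) ?leq_addl.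
rewrite expnSr in Sbox.
have hB := IH _ (contract_box q_gt0 Sbox) (avoids_contract q aS).
have hW := card_wide_blocks k_gt0 q_gt0 Sbox aS.
have hT := card_tall_blocks k_gt0 q_gt0 Sbox aS.
have hk : k.-1 ^ 2 < q by rewrite ltn_exp2r // ltn_predL k_gt0.
apply: leq_trans (card_le_blocks S) _; rewrite (expnSr q j).
set C := mt_const k in hB *; set Q := q ^ j in hB hW hT *.
apply: leq_trans (leq_add (leq_mul (leqnn _) hB) (leq_mul (leqnn _) (leq_add hW hT))) _.
have -> : q ^ 2 * (Q * (2 ^ q * k.-1) + Q * (2 ^ q * k.-1)) = C.-1 * Q.
  by rewrite /C /mt_const addn1 /=; lia.
rewrite [X in _ <= X]mulnA [X in _ <= X]mulnC.
apply: leq_trans (_ : k.-1 ^ 2 * (C * Q) + C * Q <= _).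
  by rewrite leq_add2l leq_mul2r leq_pred orbT.
by rewrite -[X in _ + X]mul1n -mulnDl leq_mul2r addn1 hk orbT.
Qed.

Lemma marcus_tardos a S :
  S \subset box N a -> avoids pi S -> #|S| <= mt_const k * q * a.
Proof.
move=> Sbox aS; have [a0 | a_gt0] := posnP a.
  rewrite a0 in Sbox *.
  by rewrite muln0; have := leq_trans (subset_leq_card Sbox) (card_box N 0).
have q_gt1 : 1 < q by rewrite -(exp1n 2) ltn_exp2r.
have Sbox' := subset_trans Sbox (box_subset N (up_logP a q_gt1)).
apply: leq_trans (marcus_tardos_pow Sbox' aS) _.
by rewrite -mulnA leq_mul2l expn_up_log_leq ?orbT.
Qed.
End MarcusTardos.

Definition avoiding_sets N k (pi : 'S_k) a :=
  [set S : {set point N} | (S \subset box N a) && avoids pi S].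

Lemma card_contract2_preimage N (B : {set point N}) :
  #|[set p | contract 2 p \in B]| <= 4 * #|B|.
Proof.
rewrite -sum1dep_card (partition_big (contract 2) (mem B)) //= mulnC -sum_nat_const.
apply: leq_sum => b _; rewrite sum1dep_card.
pose I i := [set j : 'I_N | j %/ 2 == i].
apply: leq_trans (_ : #|setX (I b.1) (I b.2)| <= _).
  apply/subset_leq_card/subsetP => p; rewrite !inE => /andP[_ /eqP <-].
  by rewrite !shrinkE !eqxx.
by rewrite cardsX (leq_mul (card_divn_eq _ _ _) (card_divn_eq _ _ _)).
Qed.

Definition klazar_const k := 2 * 16 ^ (2 * (mt_const k * k ^ 2)).

Section Klazar.
Variables (N k : nat) (pi : 'S_k).
Hypothesis k1 : 1 < k.
Local Notation c := (mt_const k * k ^ 2).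
Local Notation A := (avoiding_sets N pi).

Lemma avoiding_sets_subset a b : a <= b -> A a \subset A b.
Proof.
move=> ab; apply/subsetP => S; rewrite !inE => /andP[Sa ->].
by rewrite (subset_trans Sa (box_subset N ab)).
Qed.

Lemma card_avoiding_sets_le a : #|A a| <= 2 ^ (a ^ 2).
Proof.
apply: leq_trans (_ : #|powerset (box N a)| <= _).
  by apply/subset_leq_card/subsetP => S; rewrite !inE => /andP[].
by rewrite card_powerset leq_pexp2l ?card_box.
Qed.

(* A set avoiding pi in the box of side 2a is determined by its contraction,
   which avoids pi in the box of side a, and by a subset of the at most
   4 c a points lying over the contraction. *)
Lemma card_avoiding_sets_double a : #|A (a * 2)| <= #|A a| * 16 ^ (c * a).
Proof.
have contractA S : S \in A (a * 2) -> contract 2 @: S \in A a.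
  by rewrite !inE => /andP[Sbox aS]; rewrite contract_box ?avoids_contract.
rewrite -sum1_card (partition_big _ _ contractA) /=.
rewrite -sum_nat_const; apply: leq_sum => B BA.
have /[!inE] /andP[Bbox aB] : B \in A a := BA.
apply: leq_trans (_ : #|powerset [set p | contract 2 p \in B]| <= _).
  rewrite sum1dep_card; apply/subset_leq_card/subsetP => S; rewrite !inE.
  by case/andP=> _ /eqP <-; apply/subsetP => p pS; rewrite inE imset_f.
rewrite card_powerset (_ : 16 = 2 ^ 4) // -expnM leq_pexp2l //.
rewrite (leq_trans (card_contract2_preimage B)) //.
by rewrite leq_mul2l (marcus_tardos k1 Bbox aB).
Qed.

Lemma card_avoiding_sets_pow2 j : #|A (2 ^ j)| <= 2 * 16 ^ (c * 2 ^ j).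
Proof.
elim: j => [|j IH].
  by rewrite (leq_trans (card_avoiding_sets_le _)) // leq_pmulr ?expn_gt0.
rewrite expnSr; apply: leq_trans (card_avoiding_sets_double _) _.
apply: leq_trans (leq_mul IH (leqnn _)) _.
by rewrite -mulnA -expnD addnn -muln2 -mulnA.
Qed.

Lemma card_avoiding_sets a : #|A a| <= klazar_const k ^ a.
Proof.
have [-> | a_gt0] := posnP a; first exact: card_avoiding_sets_le.
have /avoiding_sets_subset/subset_leq_card := up_logP a (ltnSn 1).
move/leq_trans; apply; apply: leq_trans (card_avoiding_sets_pow2 _) _.
rewrite /klazar_const expnMn -expnM leq_mul ?leq_pexp2l //.
  by rewrite -[1](expn0 2) ltn_exp2l.
by rewrite [2 * _]mulnC -!mulnA !leq_mul2l expn_up_log_leq ?orbT.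
Qed.
End Klazar.

Section Rank.
Variable n : nat.
Implicit Types (A : {set 'I_n}) (x y : 'I_n).

Definition rank_in A x : 'I_n := insubd x #|[set y in A | y < x]|.

Lemma rank_inE A x : rank_in A x = #|[set y in A | y < x]| :> nat.
Proof.
have small : #|[set y in A | y < x]| <= x.
  by apply: (card_le_range (a := 0)) => y; rewrite inE => /andP[].
by rewrite val_insubd (leq_ltn_trans small (ltn_ord x)).
Qed.

Lemma rank_in_lt A x : x \in A -> rank_in A x < #|A|.
Proof.
move=> xA; rewrite rank_inE; apply/proper_card/properP; split.
  by apply/subsetP => y; rewrite inE => /andP[].
by exists x; rewrite // inE ltnn andbF.
Qed.

Lemma rank_in_homo A : {in A &, {homo rank_in A : x y / x < y}}.
Proof.
move=> x y xA yA xy; rewrite !rank_inE; apply/proper_card/properP; split.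
  by apply/subsetP => z; rewrite !inE => /andP[-> /ltn_trans->].
by exists x; rewrite !inE ?xA ?xy // ltnn andbF.
Qed.

Lemma rank_in_mono A : {in A &, {mono rank_in A : x y / x < y}}.
Proof.
move=> x y xA yA; apply/idP/idP; last exact: rank_in_homo.
apply: contraLR; rewrite -!leqNgt leq_eqVlt.
by case/orP=> [/eqP/ord_inj-> // | /rank_in_homo/ltnW]; apply.
Qed.

Lemma rank_in_inj A : {in A &, injective (rank_in A)}.
Proof.
move=> x y xA yA e; case: (ltngtP x y) => [xy | yx | /ord_inj //].
  by have := rank_in_homo xA yA xy; rewrite e ltnn.
by have := rank_in_homo yA xA yx; rewrite e ltnn.
Qed.
End Rank.

Lemma hcontains_intro n k (E : {set {set 'I_n}}) (pi : 'S_k) (s : 'S_n)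
    (x : 'I_k -> 'I_n) :
  {homo x : i j / i < j} -> [set x i | i : 'I_k] \in E ->
  (forall i j, pi i < pi j -> s (x i) < s (x j)) -> hcontains E pi s.
Proof.
move=> x_incr xE x_pi; apply/existsP; exists [ffun i => x i]; apply/and3P; split.
- by do 2 apply/forallP => ?; apply/implyP; rewrite !ffunE; apply: x_incr.
- by rewrite (eq_imset _ (ffunE _)).
apply/forallP => i; apply/forallP => j; rewrite !ffunE; apply/eqP; apply/idP/idP.
  exact: x_pi.
apply: contraLR; rewrite -!leqNgt leq_eqVlt.
by case/orP=> [/eqP/ord_inj/perm_inj-> // | /x_pi/ltnW].
Qed.

Section Encoding.
Variables (n k : nat) (pi : 'S_k) (E Cl : {set {set 'I_n}}) (ch : 'I_n -> {set 'I_n}).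
Hypothesis k1 : 1 < k.
Hypothesis Cl_clique : forall C, C \in Cl -> is_clique k E C.
Hypothesis ch_Cl : forall v, ch v \in Cl.
Hypothesis ch_mem : forall v, v \in ch v.

Definition part C := [set v | ch v == C].

Definition pattern (s : 'S_n) C : {set point n} :=
  [set (rank_in (part C) v, rank_in (s @: part C) (s v)) | v in part C].

Definition encode (s : 'S_n) := ([ffun w => ch ((s^-1)%g w)], [ffun C => pattern s C]).

Lemma mem_perm_part (s : 'S_n) C w : (w \in s @: part C) = (ch ((s^-1)%g w) == C).
Proof.
apply/imsetP/idP => [[v] | wC]; first by rewrite inE => vC ->; rewrite permK.
by exists ((s^-1)%g w); rewrite ?inE ?permKV.
Qed.

Lemma encode_inj : injective encode.
Proof.
move=> s1 s2 [/ffunP e_ch /ffunP e_pat]; apply/permP => v.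
set C := ch v; have vC : v \in part C by rewrite inE.
have e_img : s1 @: part C = s2 @: part C.
  by apply/setP => w; rewrite !mem_perm_part -!(ffunE (fun w => ch (_ w))) e_ch.
have := e_pat C; rewrite !ffunE.
move=> /setP/(_ (rank_in (part C) v, rank_in (s1 @: part C) (s1 v))).
rewrite imset_f // => /esym/imsetP[u uC [/(rank_in_inj vC uC) <-]].
rewrite e_img => e_rank; apply: (rank_in_inj _ _ e_rank); last exact: imset_f.
by rewrite -e_img imset_f.
Qed.

Lemma pattern_box (s : 'S_n) C : pattern s C \subset box n #|part C|.
Proof.
apply/subsetP => _ /imsetP[v vC ->]; rewrite inE /= rank_in_lt //.
by rewrite -(card_imset _ (@perm_inj _ s)) rank_in_lt ?imset_f.
Qed.

Lemma pattern_avoids (s : 'S_n) C : havoids E pi s -> avoids pi (pattern s C).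
Proof.
move/negP=> hav; apply/avoidsP => f [fP f1 f2]; apply: hav.
have [x hx] : exists x : 'I_k -> 'I_n, forall t, x t \in part C /\
    f t = (rank_in (part C) (x t), rank_in (s @: part C) (s (x t))).
  apply: (fin_all_exists (P := fun t v => v \in part C /\
    f t = (rank_in (part C) v, rank_in (s @: part C) (s v)))) => t.
  by have /imsetP[v vC ->] := fP t; exists v.
have x_incr : {homo x : i j / i < j}.
  move=> i j /f1; case: (hx i) => xi ->; case: (hx j) => xj -> /=.
  by rewrite rank_in_mono.
have x_sub : [set x t | t : 'I_k] \subset C.
  apply/subsetP => _ /imsetP[t _ ->].
  by case: (hx t); rewrite inE => /eqP <- _; apply: ch_mem.
have C_Cl : C \in Cl.
  by case: (hx (Ordinal (ltnW k1))); rewrite inE => /eqP <- _; apply: ch_Cl.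
apply: (hcontains_intro x_incr).
  apply: (Cl_clique C_Cl x_sub).
  by rewrite card_imset ?card_ord; last exact: ord_homo_inj.
move=> i j /f2; case: (hx i) => xi ->; case: (hx j) => xj -> /=.
by rewrite rank_in_mono ?imset_f.
Qed.

Lemma sum_card_part : \sum_C #|part C| = n.
Proof.
rewrite -[RHS]card_ord -sum1_card (partition_big ch predT) //=.
by apply: eq_bigr => C _; rewrite sum1dep_card.
Qed.

Lemma card_havoids_le : #|[set s | havoids E pi s]| <= (#|Cl| * klazar_const k) ^ n.
Proof.
rewrite -(card_imset _ encode_inj) expnMn.
pose Pat C := avoiding_sets n pi #|part C|.
apply: (@leq_trans #|[predX ffun_on (mem Cl) & family (fun C => mem (Pat C))]|).
  apply/subset_leq_card/subsetP => _ /imsetP[s hs ->]; rewrite inE in hs.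
  rewrite inE /=; apply/andP; split.
    by apply/ffun_onP => w; rewrite ffunE ch_Cl.
  by apply/familyP => C; rewrite ffunE inE pattern_box pattern_avoids.
rewrite cardX card_ffun_on card_ord card_family foldrE big_map big_enum /=.
rewrite leq_mul2l -[X in _ <= _ ^ X]sum_card_part expn_sum leq_prod ?orbT // => C _.
exact: card_avoiding_sets.
Qed.
End Encoding.

Lemma double_count_cliques n L (Cl : {set {set 'I_n}}) :
  (forall C, C \in Cl -> #|C| = L) ->
  #|Cl| * L = \sum_(v < n) #|[set C in Cl | v \in C]|.
Proof.
move=> hL; rewrite -sum_nat_const.
have -> : \sum_(C in Cl) L = \sum_(C in Cl) \sum_(v < n) (v \in C : nat).
  apply: eq_bigr => C /hL <-; rewrite -sum1_card big_mkcond /=.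
  by apply: eq_bigr => v _; case: (v \in C).
by rewrite exchange_big /=; apply: eq_bigr => v _; rewrite sum_nat_bool.
Qed.

Section RealBounds.
Local Open Scope R_scope.

Lemma INR_expn a b : INR (a ^ b) = INR a ^ b.
Proof. by elim: b => [|b IH]; rewrite ?expn0 // expnS -multE mult_INR IH. Qed.

Lemma INR_sum_le n (F : 'I_n -> nat) (D : R) :
  (forall i, INR (F i) <= D) -> INR (\sum_(i < n) F i) <= INR n * D.
Proof.
elim: n F => [|n IH] F hF; first by rewrite big_ord0 /=; lra.
rewrite big_ord_recr plus_INR S_INR Rmult_plus_distr_r Rmult_1_l.
exact: Rplus_le_compat (IH _ (fun i => hF _)) (hF _).
Qed.

Lemma Rpower_ln_le n e : (2 <= n)%N -> 0 <= e -> Rpower (ln 2) e <= Rpower (ln (INR n)) e.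
Proof.
move=> /leP/le_INR n2 e0; apply: Rle_Rpower_l => //; split.
  by rewrite -ln_1; apply: ln_increasing; lra.
case: (Rle_lt_or_eq_dec 2 (INR n) n2) => [lt | <-]; last exact: Rle_refl.
by apply/Rlt_le/ln_increasing; lra.
Qed.

Lemma INR_mul_le_polylog (m K n L : nat) (D e : R) :
  (0 < L)%N -> (2 <= n)%N -> 0 < e -> INR m * INR L <= INR n * D ->
  INR (m * K) <=
    INR K * D / Rpower (ln 2) (2 + e) * INR n * Rpower (ln (INR n)) (2 + e) / INR L.
Proof.
move=> /ltP/lt_0_INR L0 n2 e0 hm.
set l2 := Rpower (ln 2) (2 + e); set lnn := Rpower (ln (INR n)) (2 + e).
have l2_pos : 0 < l2 by apply: exp_pos.
have l2_le : l2 <= lnn by apply: Rpower_ln_le n2 _; lra.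
have m_le : INR m <= INR n * D / INR L.
  by apply: (Rmult_le_reg_r (INR L)) => //; rewrite /Rdiv Rmult_assoc Rinv_l; lra.
have K0 := pos_INR K; have m0 := pos_INR m.
rewrite -multE mult_INR.
have -> : INR K * D / l2 * INR n * lnn / INR L = (INR n * D / INR L * INR K) * (lnn / l2).
  by field; lra.
apply: Rle_trans (_ : INR n * D / INR L * INR K * 1 <= _).
  by rewrite Rmult_1_r; apply: Rmult_le_compat_r.
apply: Rmult_le_compat_l; first by apply: Rmult_le_pos; lra.
by apply: (Rmult_le_reg_r l2) => //; rewrite /Rdiv Rmult_assoc Rinv_l; lra.
Qed.
End RealBounds.

Theorem theorem2p4 (k : nat) (pi : 'S_k) (eps delta0 Delta0 : R) :
  (2 <= k)%N -> Rlt 0 eps -> Rle 1 delta0 -> Rlt 0 Delta0 ->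
  exists c : R,
    forall (n L : nat) (E : {set {set 'I_n}}) (Cl : {set {set 'I_n}}),
      (2 <= n)%N -> (0 < L)%N ->
      k_uniform k E ->
      (forall C, C \in Cl -> #|C| = L /\ is_clique k E C) ->
      (forall v : 'I_n,
          Rle delta0 (INR #|[set C in Cl | v \in C]|) /\
          Rle (INR #|[set C in Cl | v \in C]|) Delta0) ->
      Rle (INR #|[set sigma : 'S_n | havoids E pi sigma]|)
        (pow (c * INR n * Rpower (ln (INR n)) (2 + eps) / INR L) n)%R.
Proof.
move=> k2 eps0 d1 _.
exists (Rdiv (Rmult (INR (klazar_const k)) Delta0) (Rpower (ln 2) (2 + eps))).
move=> n L E Cl n2 L0 _ hCl hdeg.
have [ch ch_Cl] : exists ch : 'I_n -> {set 'I_n}, forall v, ch v \in Cl /\ v \in ch v.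
  apply: (fin_all_exists (P := fun v C => C \in Cl /\ v \in C)) => v.
  have /card_gt0P[C] : (0 < #|[set C in Cl | v \in C]|)%N.
    by apply/ltP/INR_lt; have [+ _] := hdeg v; rewrite /=; lra.
  by rewrite inE => /andP; exists C.
have count := card_havoids_le pi k2 (fun C hC => (hCl C hC).2)
  (fun v => (ch_Cl v).1) (fun v => (ch_Cl v).2).
apply: Rle_trans (le_INR _ _ (leP count)) _; rewrite INR_expn.
apply: pow_incr; split; first exact: pos_INR.
apply: INR_mul_le_polylog => //; rewrite -mult_INR multE double_count_cliques.
  by apply: INR_sum_le => v; case: (hdeg v).
by move=> C /hCl[].
Qed.
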